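(* For all integers $n\ge0$ and odd $k\ge3$, $$\delta_kH^{\mathfrak a}(1^n)=-\sum_{i=\max(1,k-n)}^{k-1}\frac1k\binom ki\,T^i\,H^{\mathfrak a}(1^{n-k+i}).$$
   Context: $\mathcal M^{(1)}=\mathbb Q[\zeta^{\mathfrak a}(3),\zeta^{\mathfrak a}(5),\dots]$ is the free polynomial subalgebra of depth-one motivic MZVs in $\mathcal A=\mathcal H/\zeta^{\mathfrak m}(2)\mathcal H$; $\zeta^{\mathfrak a}(k)=0$ for even $k$. For odd $k\ge3$, $\delta_k$ is the continuous $\mathbb Q((T))$-linear derivation $\partial/\partial\zeta^{\mathfrak a}(k)$ of $\mathcal M^{(1)}((T))$. Motivic power sums: $H^{\mathfrak a}(n)=(-1)^n\sum_{j\ge1}\binom{n+j-1}{n-1}\zeta^{\mathfrak a}(n+j)T^j$. Motivic elementary symmetric sums: $H^{\mathfrak a}(1^0)=1$, $H^{\mathfrak a}(1^n)=\frac1n\sum_{i=1}^n(-1)^{i-1}H^{\mathfrak a}(i)H^{\mathfrak a}(1^{n-i})$ for $n\ge1$. *)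

From HB Require Import structures.
From mathcomp Require Import all_boot all_order all_algebra.
Set Implicit Arguments. Unset Strict Implicit. Unset Printing Implicit Defensive.
Import Order.TTheory GRing.Theory Num.Theory.
Local Open Scope ring_scope.

(* Formal power series in T with coefficients in A, as coefficient functions:
   f represents sum_m f m T^m. *)
Definition ps (A : Type) := nat -> A.

Section PS.
Variable A : comAlgType rat.

Definition ps0 : ps A := fun _ => 0.
Definition ps1 : ps A := fun m => if m == 0%N then 1 else 0.
Definition psmul (f g : ps A) : ps A :=
  fun m => \sum_(i < m.+1) f i * g (m - i)%N.
Definition psTpow (i : nat) (f : ps A) : ps A :=
  fun m => if (i <= m)%N then f (m - i)%N else 0.
Definition psmap (D : A -> A) (f : ps A) : ps A := fun m => D (f m).

Definition zeta_a (z : nat -> A) (m : nat) : A :=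
  if odd m && (3 <= m)%N then z m else 0.

Definition Hpow (z : nat -> A) (n : nat) : ps A :=
  fun j => if j == 0%N then 0
           else (((-1) ^+ n * ('C(n + j - 1, n - 1))%:R : rat) *: zeta_a z (n + j)%N).

(* [:: H^a(1^0); ... ; H^a(1^n)] *)
Fixpoint Helems (z : nat -> A) (n : nat) : seq (ps A) :=
  match n with
  | 0 => [:: ps1]
  | n'.+1 =>
      let s := Helems z n' in
      rcons s (fun m => ((n'.+1)%:R^-1 : rat) *:
        \sum_(1 <= i < n'.+2)
           (((-1) ^+ i.-1 : rat) *: psmul (Hpow z i) (nth ps0 s (n'.+1 - i)%N) m))
  end.

Definition Helem (z : nat -> A) (n : nat) : ps A := nth ps0 (Helems z n) n.

Definition is_derivation (D : A -> A) : Prop :=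
  (forall x y, D (x + y) = D x + D y) /\
  (forall (c : rat) x, D (c *: x) = c *: D x) /\
  (forall x y, D (x * y) = D x * y + x * D y).
End PS.

From HB Require Import structures.
From mathcomp Require Import all_boot all_order all_algebra.
From mathcomp Require Import boolp zify ring.
Import Order.TTheory GRing.Theory Num.Theory.
Local Open Scope ring_scope.

(* Newton's identity n e_n = \sum_(1 <= i <= n) (-1)^(i-1) p_i e_(n-i) is the
   recursion defining H(1^n) from the power sums p_i = H(i).  Coefficientwise,
   delta_k is a derivation of A[[T]], and it sees only the coefficient of
   zeta(k) in p_i, so delta_k p_i = (-1)^i binom(k-1,i-1) T^(k-i) for i < k and
   0 otherwise.  Applying delta_k to Newton's identity, the terms with
   delta_k p_i give j/k binom(k,j) T^(k-j) e_(n-j) by the absorption identity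
   i binom(k,i) = k binom(k-1,i-1); in the terms with delta_k e_(n-i) the
   formula for smaller n is substituted and, after exchanging the sums, Newton's
   identity for n-j collapses them to (n-j)/k binom(k,j) T^(k-j) e_(n-j).
   Together this is n times the claimed expansion, written with j = k-i. *)

Section PowerSeriesAlgebra.
Variable A : comAlgType rat.
Implicit Types (f g h : ps A) (m : nat).

HB.instance Definition _ := gen_eqMixin (ps A).
HB.instance Definition _ := gen_choiceMixin (ps A).

Definition psadd f g : ps A := fun m => f m + g m.
Definition psopp f : ps A := fun m => - f m.

Fact psaddA : associative psadd.
Proof. by move=> f g h; apply: funext => m; rewrite /psadd addrA. Qed.
Fact psaddC : commutative psadd.
Proof. by move=> f g; apply: funext => m; rewrite /psadd addrC. Qed.
Fact psadd0 : left_id (ps0 A) psadd.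
Proof. by move=> f; apply: funext => m; rewrite /psadd add0r. Qed.
Fact psaddN : left_inverse (ps0 A) psopp psadd.
Proof. by move=> f; apply: funext => m; rewrite /psadd /psopp addNr. Qed.
HB.instance Definition _ :=
  GRing.isZmodule.Build (ps A) psaddA psaddC psadd0 psaddN.

Lemma psmul_rev f g m : psmul f g m = \sum_(i < m.+1) f (m - i)%N * g i.
Proof.
rewrite /psmul (reindex_inj rev_ord_inj) /=.
by apply: eq_bigr => i _; rewrite subKn // leq_ord.
Qed.

Fact psmulA : associative (@psmul A).
Proof.
move=> f g h; apply: funext => m; rewrite [RHS]psmul_rev.
pose coef3 i l := f i * (g (m - i - l)%N * h l).
transitivity (\sum_(i < m.+1) \sum_(l < m.+1 | (l <= m - i)%N) coef3 i l).
  apply: eq_bigr => /= i _; rewrite psmul_rev big_distrr /=.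
  by rewrite (big_ord_narrow_leq (leq_subr _ _)).
rewrite (exchange_big_dep predT) //=; apply: eq_bigr => l _.
transitivity (\sum_(i < m.+1 | (i <= m - l)%N) coef3 i l).
  apply: eq_bigl => i; rewrite -ltnS -(ltnS i) -!subSn ?leq_ord //.
  by rewrite -subn_gt0 -(subn_gt0 i) -!subnDA addnC.
rewrite (big_ord_narrow_leq (leq_subr _ _)) /psmul big_distrl /=.
by apply: eq_bigr => i _; rewrite /coef3 -!subnDA addnC mulrA.
Qed.

Fact psmulC : commutative (@psmul A).
Proof.
by move=> f g; apply: funext => m; rewrite psmul_rev; apply: eq_bigr => i _; rewrite mulrC.
Qed.

Fact psmul1 : left_id (ps1 A) (@psmul A).
Proof.
move=> f; apply: funext => m; rewrite /psmul big_ord_recl /ps1 /= mul1r subn0.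
by rewrite big1 ?addr0 // => i _; rewrite mul0r.
Qed.

Fact psmulDl : left_distributive (@psmul A) psadd.
Proof.
move=> f g h; apply: funext => m; rewrite /psmul /psadd -big_split /=.
by apply: eq_bigr => i _; rewrite mulrDl.
Qed.

Fact ps1_neq0 : ps1 A != ps0 A.
Proof.
by apply/eqP => /(congr1 (fun f => f 0%N)); rewrite /ps1 /ps0 /=; apply/eqP/oner_neq0.
Qed.

HB.instance Definition _ :=
  GRing.Zmodule_isComNzRing.Build (ps A) psmulA psmulC psmul1 psmulDl ps1_neq0.

Definition psscale (c : rat) f : ps A := fun m => c *: f m.

Fact psscaleA a b f : psscale a (psscale b f) = psscale (a * b) f.
Proof. by apply: funext => m; rewrite /psscale scalerA. Qed.
Fact psscale1 : left_id 1 psscale.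
Proof. by move=> f; apply: funext => m; rewrite /psscale scale1r. Qed.
Fact psscaleDr : right_distributive psscale +%R.
Proof. by move=> a f g; apply: funext => m; rewrite /psscale /= /psadd scalerDr. Qed.
Fact psscaleDl f : {morph psscale^~ f : a b / a + b}.
Proof. by move=> a b; apply: funext => m; rewrite /psscale /= /psadd scalerDl. Qed.
HB.instance Definition _ :=
  GRing.Zmodule_isLmodule.Build rat (ps A) psscaleA psscale1 psscaleDr psscaleDl.

Fact psscaleAl a f g : a *: (f * g) = (a *: f) * g.
Proof.
apply: funext => m; rewrite /GRing.scale /= /psscale /GRing.mul /= /psmul.
by rewrite scaler_sumr; apply: eq_bigr => i _; rewrite scalerAl.
Qed.
HB.instance Definition _ := GRing.Lmodule_isLalgebra.Build rat (ps A) psscaleAl.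
HB.instance Definition _ := GRing.Lalgebra_isComAlgebra.Build rat (ps A).

Lemma coef_psD f g m : (f + g) m = f m + g m. Proof. by []. Qed.
Lemma coef_ps0 m : (0 : ps A) m = 0. Proof. by []. Qed.
Lemma coef_ps1 m : (1 : ps A) m = (m == 0)%:R.
Proof. by change (ps1 A m = (m == 0)%:R); rewrite /ps1; case: (m == 0)%N. Qed.
Lemma coef_psN f m : (- f) m = - f m. Proof. by []. Qed.
Lemma coef_psZ c f m : (c *: f) m = c *: f m. Proof. by []. Qed.
Lemma coef_psM f g m : (f * g) m = \sum_(i < m.+1) f i * g (m - i)%N.
Proof. by []. Qed.

Lemma coef_ps_sum I (r : seq I) (P : pred I) (F : I -> ps A) m :
  (\sum_(i <- r | P i) F i) m = \sum_(i <- r | P i) F i m.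
Proof. by elim/big_rec2: _ => // i y1 y2 _ <-. Qed.

Definition psX : ps A := fun m => (m == 1%N)%:R.

Lemma coef_psXM f m : (psX * f) m = if (1 <= m)%N then f (m - 1)%N else 0.
Proof.
rewrite coef_psM; case: m => [|m]; first by rewrite big_ord1 mul0r.
rewrite 2!big_ord_recl /psX /= mul0r mul1r add0r subn1 big1 ?addr0 //.
by move=> i _; rewrite mul0r.
Qed.

Lemma coef_psXnM i f m :
  (psX ^+ i * f) m = if (i <= m)%N then f (m - i)%N else 0.
Proof.
elim: i m => [|i IH] m; first by rewrite expr0 mul1r subn0.
by rewrite exprS -mulrA coef_psXM; case: m => [|m] //=; rewrite subn1 IH.
Qed.

Lemma coef_psXn i m : (psX ^+ i) m = (m == i)%:R.
Proof.
rewrite -[psX ^+ i]mulr1 coef_psXnM coef_ps1.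
case: (ltngtP i m) => [lt_im|lt_mi|->] //; last by rewrite subnn.
by rewrite subn_eq0 leqNgt lt_im.
Qed.

Lemma psTpowE i f : psTpow i f = psX ^+ i * f.
Proof. by apply: funext => m; rewrite coef_psXnM. Qed.

End PowerSeriesAlgebra.

Section Derivation.
Context {R : comAlgType rat} {D : R -> R}.
Hypothesis derD : is_derivation D.

Lemma derivationD x y : D (x + y) = D x + D y. Proof. by case: derD. Qed.
Lemma derivationZ (c : rat) x : D (c *: x) = c *: D x.
Proof. by case: derD => _ []. Qed.
Lemma derivationM x y : D (x * y) = D x * y + x * D y.
Proof. by case: derD => _ []. Qed.

Lemma derivation0 : D 0 = 0.
Proof. by apply: (addrI (D 0)); rewrite -derivationD !addr0. Qed.

Lemma derivation1 : D 1 = 0.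
Proof.
by apply: (addrI (D 1)); rewrite addr0 -[in RHS](mulr1 1) derivationM mulr1 mul1r.
Qed.

Lemma derivation_sum I (r : seq I) (P : pred I) (F : I -> R) :
  D (\sum_(i <- r | P i) F i) = \sum_(i <- r | P i) D (F i).
Proof. exact: (big_morph D derivationD derivation0). Qed.

Lemma psmap_derivation : is_derivation (psmap D : ps R -> ps R).
Proof.
split; [|split] => [f g|c f|f g]; apply: funext => m; rewrite /psmap.
- exact: derivationD.
- exact: derivationZ.
rewrite coef_psD !coef_psM derivation_sum -big_split /=.
by apply: eq_bigr => i _; rewrite derivationM.
Qed.

End Derivation.

Section Newton.
Variables (A : comAlgType rat) (z : nat -> A).

Lemma size_Helems n : size (Helems z n) = n.+1.
Proof. by elim: n => //= n IH; rewrite size_rcons IH. Qed.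

Lemma nth_Helems n j : (j <= n)%N -> nth (ps0 A) (Helems z n) j = Helem z j.
Proof.
elim: n => [|n IH]; first by rewrite leqn0 => /eqP ->.
rewrite leq_eqVlt => /predU1P[-> //|lt_jn].
by rewrite /= nth_rcons size_Helems lt_jn IH.
Qed.

Lemma Helem0 : Helem z 0 = 1. Proof. by []. Qed.

Lemma Helem_newton n : (n%:R : rat) *: Helem z n =
  \sum_(1 <= i < n.+1) ((-1) ^+ i.-1 : rat) *: (Hpow z i * Helem z (n - i)).
Proof.
case: n => [|n]; first by rewrite scale0r big_geq.
apply: funext => m; rewrite coef_psZ {1}/Helem /= nth_rcons size_Helems ltnn eqxx.
rewrite scalerA mulfV ?pnatr_eq0 // scale1r coef_ps_sum.
apply: eq_big_nat => i /andP[i_gt0 lt_in].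
by rewrite coef_psZ nth_Helems //; lia.
Qed.

End Newton.

Definition bin_div (k j : nat) : rat := k%:R^-1 * ('C(k, j))%:R.

Lemma sign_bin_absorption (k i : nat) : (0 < i)%N -> (0 < k)%N ->
  (-1) ^+ i.-1 * ((-1) ^+ i * ('C(k.-1, i.-1))%:R) = - (i%:R * bin_div k i) :> rat.
Proof.
case: i => // i _ k_gt0; rewrite /bin_div /= exprS.
have absorb : (i.+1%:R * ('C(k, i.+1))%:R : rat) = k%:R * ('C(k.-1, i))%:R.
  by rewrite -!natrM mul_bin_diag.
have sign2 : ((-1) ^+ i * (-1) ^+ i : rat) = 1.
  by rewrite -exprMn mulrNN mulr1 expr1n.
rewrite (mulrCA i.+1%:R) absorb mulKf ?pnatr_eq0 -?lt0n //.
by rewrite !mulNr mul1r mulrN mulrA sign2 mul1r.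
Qed.

Section Delta.
Context {A : comAlgType rat} {z : nat -> A} {D : A -> A} {k : nat}.
Hypothesis derD : is_derivation D.
Hypothesis D_z : forall j, odd j -> (3 <= j)%N -> D (z j) = (j == k)%:R.
Hypothesis k_odd : odd k.
Hypothesis k_ge3 : (3 <= k)%N.

Local Notation Dp := (psmap D).
Local Notation E := (Helem z).
Local Notation T := (psX A).
Let derDp := psmap_derivation derD.

Lemma derivation_zeta_a j : D (zeta_a z j) = (j == k)%:R.
Proof.
rewrite /zeta_a; case: ifP => [/andP[j_odd j_ge3]|not_gen]; first exact: D_z.
by rewrite derivation0 //; case: eqP not_gen => // ->; rewrite k_odd k_ge3.
Qed.

Lemma psmap_Hpow i : (0 < i)%N -> Dp (Hpow z i) =
  if (i < k)%N then ((-1) ^+ i * ('C(k.-1, i.-1))%:R : rat) *: T ^+ (k - i)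
  else 0.
Proof.
move=> i_gt0; apply: funext => m; rewrite /psmap /Hpow.
case: (eqVneq m 0%N) => [->|m_neq0].
  rewrite derivation0 //; case: ifP => // lt_ik.
  by rewrite coef_psZ coef_psXn (_ : (0 == k - i)%N = false) ?scaler0 //; lia.
rewrite derivationZ // derivation_zeta_a.
case: ifP => lt_ik; last first.
  by rewrite coef_ps0 (_ : (i + m == k)%N = false) ?scaler0 //; lia.
rewrite coef_psZ coef_psXn; case: (eqVneq (i + m)%N k) => [sum_k|sum_neq_k]; last first.
  by rewrite (_ : (m == k - i)%N = false) ?scaler0 //; lia.
by rewrite -sum_k addKn eqxx !subn1.
Qed.

Lemma newton_psmap_Hpow n :
  \sum_(1 <= i < n.+1) ((-1) ^+ i.-1 : rat) *: (Dp (Hpow z i) * E (n - i)) =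
  - \sum_(1 <= j < k | (j <= n)%N)
      (j%:R * bin_div k j) *: (T ^+ (k - j) * E (n - j)).
Proof.
transitivity (\sum_(1 <= i < n.+1 | (i < k)%N)
    - ((i%:R * bin_div k i) *: (T ^+ (k - i) * E (n - i)))).
  rewrite [RHS]big_mkcond /=; apply: eq_big_nat => i /andP[i_gt0 _].
  rewrite psmap_Hpow //; case: ifP => _; last by rewrite mul0r scaler0.
  by rewrite -scalerAl scalerA sign_bin_absorption ?scaleNr //; lia.
rewrite sumrN; congr (- _).
rewrite (big_nat_widen _ _ _ _ _ (_ : n.+1 <= k + n)%N); last by lia.
rewrite [RHS](big_nat_widen _ _ _ _ _ (_ : k <= k + n)%N); last by lia.
by apply: eq_bigl => i; rewrite andbC.
Qed.

Lemma newton_psmap_Helem n :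
  (forall j, (j < n)%N -> Dp (E j) =
     - \sum_(1 <= l < k | (l <= j)%N) bin_div k l *: (T ^+ (k - l) * E (j - l))) ->
  \sum_(1 <= i < n.+1) ((-1) ^+ i.-1 : rat) *: (Hpow z i * Dp (E (n - i))) =
  - \sum_(1 <= j < k | (j <= n)%N)
      (bin_div k j * (n - j)%:R) *: (T ^+ (k - j) * E (n - j)).
Proof.
move=> IH.
transitivity (- \sum_(1 <= i < n.+1) \sum_(1 <= j < k | (j <= n - i)%N)
    ((-1) ^+ i.-1 * bin_div k j) *: (T ^+ (k - j) * (Hpow z i * E (n - j - i)))).
  rewrite -sumrN; apply: eq_big_nat => i /andP[i_gt0 le_in].
  rewrite IH; last by lia.
  rewrite mulrN scalerN mulr_sumr scaler_sumr; congr (- _); apply: eq_bigr => j _.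
  by rewrite -scalerAr scalerA [in LHS](mulrCA (Hpow z i)) subnAC.
congr (- _).
rewrite (exchange_big_dep_nat (fun j => j <= n)%N) /=; last by move=> *; lia.
rewrite big_nat_cond [RHS]big_nat_cond.
apply: eq_bigr => j /andP[/andP[j_gt0 _] le_jn].
under eq_bigr do rewrite mulrC -scalerA scalerAr.
rewrite -scaler_sumr -mulr_sumr.
rewrite (eq_bigl (fun i => true && (i < (n - j).+1))%N); last first.
  by move=> i; apply/idP/idP => /=; lia.
rewrite -big_nat_widen; last by lia.
by rewrite -[in RHS]scalerA [in RHS]scalerAr Helem_newton.
Qed.

Lemma psmap_Helem n : Dp (E n) =
  - \sum_(1 <= j < k | (j <= n)%N) bin_div k j *: (T ^+ (k - j) * E (n - j)).
Proof.
elim/ltn_ind: n => -[_|n IH].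
  rewrite Helem0 (derivation1 derDp) big_nat_cond big1 ?oppr0 //.
  by move=> j /andP[/andP[j_gt0 _] j_le0]; lia.
have n1_neq0 : (n.+1%:R : rat) != 0 by rewrite pnatr_eq0.
apply: (scalerI n1_neq0).
rewrite -(derivationZ derDp) Helem_newton (derivation_sum derDp).
under eq_bigr do rewrite (derivationZ derDp) (derivationM derDp) scalerDr.
rewrite big_split /= newton_psmap_Hpow newton_psmap_Helem //.
rewrite -opprD -big_split /= scalerN scaler_sumr; congr (- _).
apply: eq_bigr => j le_jn; rewrite scalerA -scalerDl natrB //; congr (_ *: _).
ring.
Qed.

Lemma psmap_Helem_psTpow n : Dp (E n) =
  - \sum_(maxn 1 (k - n) <= i < k) bin_div k i *: psTpow i (E (n + i - k)).
Proof.
rewrite psmap_Helem big_nat_rev /= !big_geq_mkord; congr (- _).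
apply: eq_big => i; first by have := ltn_ord i; rewrite /=; lia.
move=> /andP[_ le_kin]; have le_ik := ltnW (ltn_ord i).
have -> : (1 + k - i.+1 = k - i)%N by lia.
have -> : (n - (k - i) = n + i - k)%N by lia.
by rewrite psTpowE subKn // /bin_div bin_sub.
Qed.

End Delta.

Theorem mainTheorem6 (A : comAlgType rat) (z : nat -> A) (D : A -> A)
    (n k : nat) :
  is_derivation D ->
  (forall j, odd j -> (3 <= j)%N -> D (z j) = (j == k)%:R) ->
  odd k -> (3 <= k)%N ->
  forall m : nat,
    psmap D (Helem z n) m =
    - \sum_(maxn 1 (k - n) <= i < k)
        ((k%:R^-1 * ('C(k, i))%:R : rat) *: psTpow i (Helem z (n + i - k)) m).
Proof.
move=> derD D_z k_odd k_ge3 m.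
by rewrite (psmap_Helem_psTpow derD D_z k_odd k_ge3) coef_psN coef_ps_sum.
Qed.
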